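(* For any $\mathsf{F_{<:}^\top}$ term-in-context $\Theta\vdash^\top t$, if $\Theta\vdash_M t:T$ then $T$ is a minimal type for $\mathsf{F_{<:}^\top}$.
   Context: System $\mathsf{F_{<:}^{K\top}}$: raw types $T ::= \top \mid X \mid T\to T \mid \forall^{\mathsf K}(X<:T).T \mid \forall^\top(X<:T).T$, up to $\alpha$-conversion. Contexts $\Theta$: finite sequences of $X<:T$ or $x:T$ with distinct variables, each type well-formed over the preceding part. Subtyping $\Theta\vdash S<:T$: (Var) $\Theta,X<:T,\Theta'\vdash X<:T$; (Top) $T<:\top$; (Refl); (Trans); ($\to$) from $S'<:S$, $T<:T'$ infer $S\to T<:S'\to T'$; ($\forall$-Fun) from $\Theta,X<:S\vdash T<:T'$ infer $\forall^{\mathsf K}(X<:S).T<:\forall^{\mathsf K}(X<:S).T'$; ($\forall$-Loc) from $\Theta\vdash T_0<:S_0$, $\Theta,X<:S_0\vdash S_1<:T_1$ infer $\forall^{\mathsf K}(X<:S_0).S_1<:\forall^\top(X<:T_0).T_1$; ($\forall$-Top) from $\Theta\vdash T_0<:S_0$, $\Theta,X<:\top\vdash S_1<:T_1$ infer $\forall^\top(X<:S_0).S_1<:\forall^\top(X<:T_0).T_1$. Raw terms $t ::= \mathsf{top}\mid x\mid\lambda(x:T).t\mid\Lambda(X<:T).t\mid t\,t\mid t\{T\}$. $\Theta^*(T)=\Theta^*(S)$ if $T\equiv X$ and $X<:S$ occurs in $\Theta$; $\Theta^*(T)=T$ otherwise. Minimal typing $\Theta\vdash_M t:T$: $\Theta,x:T,\Theta'\vdash_M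 x:T$; $\Theta\vdash_M\mathsf{top}:\top$; from $\Theta,x:S\vdash_M t:T$ infer $\Theta\vdash_M\lambda(x:S).t:S\to T$; from $\Theta\vdash_M r:R$, $\Theta\vdash_M s:S$, $\Theta\vdash S<:S'$ with $\Theta^*(R)=S'\to T$ infer $\Theta\vdash_M r\,s:T$; from $\Theta,X<:S\vdash_M t:T$ infer $\Theta\vdash_M\Lambda(X<:S).t:\forall^{\mathsf K}(X<:S).T$; from $\Theta\vdash_M r:R$, $\Theta\vdash S<:S'$ with $\Theta^*(R)=\forall^{\mathsf K}(X<:S').T$ or $\forall^\top(X<:S').T$ infer $\Theta\vdash_M r\{S\}:T[S/X]$. An $\mathsf{F_{<:}^\top}$ type is one containing only $\forall^\top$ quantifiers; an $\mathsf{F_{<:}^\top}$ term-in-context has context and type annotations consisting of $\mathsf{F_{<:}^\top}$ types. The minimal types for $\mathsf{F_{<:}^\top}$ are the $\mathsf{F_{<:}^{K\top}}$ types generated by $T ::= S \mid \forall^{\mathsf K}(X<:S).T \mid S\to T$, where $S$ ranges over $\mathsf{F_{<:}^\top}$ types. *)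

(* System F_{<:}^{K T} with de Bruijn indices (alpha-conversion
   handled by the representation).  A single context holds both type-variable
   bindings (X <: T) and term-variable bindings (x : T); indices count all
   bindings, most recent first (index 0 = head of the list). *)
From Stdlib Require Import List Arith.
Import ListNotations.

Inductive ty : Type :=
| TTop : ty
| TVar : nat -> ty
| TArr : ty -> ty -> ty
| TAllK : ty -> ty -> ty   (* forall^K (X <: S). T, T under the binder *)
| TAllT : ty -> ty -> ty.  (* forall^Top (X <: S). T, T under the binder *)

Inductive tm : Type :=
| ttop : tm
| tvar : nat -> tm
| tlam : ty -> tm -> tm
| ttlam : ty -> tm -> tm
| tapp : tm -> tm -> tm
| ttapp : tm -> ty -> tm.

Inductive binding : Type :=
| BSub : ty -> binding
| BVar : ty -> binding.

Definition ctx := list binding.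

Fixpoint tshift (c : nat) (T : ty) : ty :=
  match T with
  | TTop => TTop
  | TVar n => if n <? c then TVar n else TVar (S n)
  | TArr A B => TArr (tshift c A) (tshift c B)
  | TAllK A B => TAllK (tshift c A) (tshift (S c) B)
  | TAllT A B => TAllT (tshift c A) (tshift (S c) B)
  end.

Definition tshiftn (k : nat) (T : ty) : ty := Nat.iter k (tshift 0) T.

(* tsubst k U T : replace index k by U (U already lives in the context
   without the binder k), decrementing indices > k. T[S/X] = tsubst 0 S T. *)
Fixpoint tsubst (k : nat) (U : ty) (T : ty) : ty :=
  match T with
  | TTop => TTop
  | TVar n => if n <? k then TVar n else if n =? k then U else TVar (pred n)
  | TArr A B => TArr (tsubst k U A) (tsubst k U B)
  | TAllK A B => TAllK (tsubst k U A) (tsubst (S k) (tshift 0 U) B)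
  | TAllT A B => TAllT (tsubst k U A) (tsubst (S k) (tshift 0 U) B)
  end.

(* Theta^*(T): follow upper bounds of type variables *)
Fixpoint expose (G : ctx) (T : ty) {struct G} : ty :=
  match T with
  | TVar n =>
      match G, n with
      | BSub B :: G', 0 => tshift 0 (expose G' B)
      | _ :: G', S m => tshift 0 (expose G' (TVar m))
      | _, _ => T
      end
  | _ => T
  end.

Inductive wf_ty : ctx -> ty -> Prop :=
| wf_Top G : wf_ty G TTop
| wf_Var G n B : nth_error G n = Some (BSub B) -> wf_ty G (TVar n)
| wf_Arr G A B : wf_ty G A -> wf_ty G B -> wf_ty G (TArr A B)
| wf_AllK G A B : wf_ty G A -> wf_ty (BSub A :: G) B -> wf_ty G (TAllK A B)
| wf_AllT G A B : wf_ty G A -> wf_ty (BSub A :: G) B -> wf_ty G (TAllT A B).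

Inductive wf_ctx : ctx -> Prop :=
| wfc_nil : wf_ctx []
| wfc_sub G T : wf_ctx G -> wf_ty G T -> wf_ctx (BSub T :: G)
| wfc_var G T : wf_ctx G -> wf_ty G T -> wf_ctx (BVar T :: G).

Inductive wf_tm : ctx -> tm -> Prop :=
| wft_top G : wf_tm G ttop
| wft_var G n T : nth_error G n = Some (BVar T) -> wf_tm G (tvar n)
| wft_lam G T t : wf_ty G T -> wf_tm (BVar T :: G) t -> wf_tm G (tlam T t)
| wft_tlam G T t : wf_ty G T -> wf_tm (BSub T :: G) t -> wf_tm G (ttlam T t)
| wft_app G r s : wf_tm G r -> wf_tm G s -> wf_tm G (tapp r s)
| wft_tapp G r T : wf_tm G r -> wf_ty G T -> wf_tm G (ttapp r T).

Inductive sub : ctx -> ty -> ty -> Prop :=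
| S_Var G n B : nth_error G n = Some (BSub B) -> sub G (TVar n) (tshiftn (S n) B)
| S_Top G T : sub G T TTop
| S_Refl G T : sub G T T
| S_Trans G A B C : sub G A B -> sub G B C -> sub G A C
| S_Arr G S1 S2 T1 T2 : sub G S2 S1 -> sub G T1 T2 -> sub G (TArr S1 T1) (TArr S2 T2)
| S_AllFun G S0 T T' : sub (BSub S0 :: G) T T' -> sub G (TAllK S0 T) (TAllK S0 T')
| S_AllLoc G S0 S1 T0 T1 :
    sub G T0 S0 -> sub (BSub S0 :: G) S1 T1 -> sub G (TAllK S0 S1) (TAllT T0 T1)
| S_AllTop G S0 S1 T0 T1 :
    sub G T0 S0 -> sub (BSub TTop :: G) S1 T1 -> sub G (TAllT S0 S1) (TAllT T0 T1).

Inductive mtyp : ctx -> tm -> ty -> Prop :=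
| M_Var G n T : nth_error G n = Some (BVar T) -> mtyp G (tvar n) (tshiftn (S n) T)
| M_Top G : mtyp G ttop TTop
| M_Abs G S0 t T :
    (* the body type lives in G, x:S; it cannot mention the term variable x *)
    mtyp (BVar S0 :: G) t (tshift 0 T) -> mtyp G (tlam S0 t) (TArr S0 T)
| M_App G r s R S0 S' T :
    mtyp G r R -> mtyp G s S0 -> sub G S0 S' -> expose G R = TArr S' T ->
    mtyp G (tapp r s) T
| M_TAbs G S0 t T : mtyp (BSub S0 :: G) t T -> mtyp G (ttlam S0 t) (TAllK S0 T)
| M_TApp G r R S0 S' T :
    mtyp G r R -> sub G S0 S' ->
    (expose G R = TAllK S' T \/ expose G R = TAllT S' T) ->
    mtyp G (ttapp r S0) (tsubst 0 S0 T).

Fixpoint is_topty (T : ty) : Prop :=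
  match T with
  | TTop => True
  | TVar _ => True
  | TArr A B => is_topty A /\ is_topty B
  | TAllK _ _ => False
  | TAllT A B => is_topty A /\ is_topty B
  end.

Definition topty_binding (b : binding) : Prop :=
  match b with BSub T => is_topty T | BVar T => is_topty T end.

Definition topty_ctx (G : ctx) : Prop := Forall topty_binding G.

Fixpoint topty_tm (t : tm) : Prop :=
  match t with
  | ttop => True
  | tvar _ => True
  | tlam T b => is_topty T /\ topty_tm b
  | ttlam T b => is_topty T /\ topty_tm b
  | tapp r s => topty_tm r /\ topty_tm s
  | ttapp r T => topty_tm r /\ is_topty T
  end.

Inductive min_ty : ty -> Prop :=
| min_base S0 : is_topty S0 -> min_ty S0
| min_allK S0 T : is_topty S0 -> min_ty T -> min_ty (TAllK S0 T)
| min_arr S0 T : is_topty S0 -> min_ty T -> min_ty (TArr S0 T).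

(* Every type that can be
   read off an F^Top context or written in an F^Top term is an F^Top type, and
   F^Top types are closed under shifting, substitution of F^Top types and
   exposure.  A forall^K quantifier can only be introduced by a type
   abstraction, at the head of a minimal type; hence the codomain of an arrow
   and the body of a forall^K are again minimal, and instantiating a minimal
   body with an F^Top type keeps it minimal. *)
From Stdlib Require Import List Arith.

Lemma is_topty_tshift (c : nat) (T : ty) : is_topty (tshift c T) <-> is_topty T.
Proof.
  revert c; induction T; intros c; simpl; try tauto.
  - destruct (n <? c); simpl; tauto.
  - rewrite IHT1, IHT2; tauto.
  - rewrite IHT1, IHT2; tauto.
Qed.

Lemma is_topty_tshiftn (k : nat) (T : ty) : is_topty T -> is_topty (tshiftn k T).
Proof.
  induction k; intros H; simpl; auto.
  apply is_topty_tshift, IHk, H.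
Qed.

Lemma is_topty_tsubst (k : nat) (U T : ty) :
  is_topty U -> is_topty T -> is_topty (tsubst k U T).
Proof.
  revert k U; induction T; intros k U HU HT; simpl in *; auto.
  - destruct (n <? k); simpl; auto.
    destruct (n =? k); simpl; auto.
  - destruct HT; split; auto.
  - destruct HT; split; auto.
    apply IHT2; auto.
    apply is_topty_tshift; auto.
Qed.

Lemma topty_ctx_nth (G : ctx) (n : nat) (b : binding) :
  topty_ctx G -> nth_error G n = Some b -> topty_binding b.
Proof.
  intros HG Hn.
  unfold topty_ctx in HG; rewrite Forall_forall in HG.
  apply HG, (nth_error_In _ _ Hn).
Qed.

Lemma is_topty_expose (G : ctx) (T : ty) :
  topty_ctx G -> is_topty T -> is_topty (expose G T).
Proof.
  revert T; induction G as [|b G IH]; intros T HG HT.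
  - destruct T; simpl; auto.
  - inversion HG as [|? ? Hb HG']; subst.
    destruct T as [| [|n] | | |]; simpl; auto; destruct b; simpl in *; auto;
      apply is_topty_tshift, IH; simpl; auto.
Qed.

Lemma min_ty_tshift_inv (c : nat) (T : ty) : min_ty (tshift c T) -> min_ty T.
Proof.
  revert c; induction T; intros c H; simpl in H.
  - apply min_base; simpl; auto.
  - apply min_base; simpl; auto.
  - inversion H; subst.
    + apply min_base, (is_topty_tshift c); auto.
    + apply min_arr; [apply (is_topty_tshift c) | eapply IHT2]; eauto.
  - inversion H; subst.
    + contradiction.
    + apply min_allK; [apply (is_topty_tshift c) | eapply IHT2]; eauto.
  - inversion H; subst.
    apply min_base, (is_topty_tshift c); auto.
Qed.

Lemma min_ty_tsubst (k : nat) (U T : ty) :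
  is_topty U -> min_ty T -> min_ty (tsubst k U T).
Proof.
  intros HU HT; revert k U HU; induction HT; intros k U HU; simpl.
  - apply min_base, is_topty_tsubst; auto.
  - apply min_allK; [apply is_topty_tsubst; auto |].
    apply IHHT, is_topty_tshift; auto.
  - apply min_arr; [apply is_topty_tsubst | apply IHHT]; auto.
Qed.

(* A variable exposes to an F^Top type; any other type exposes to itself. *)
Lemma min_ty_expose (G : ctx) (R : ty) :
  topty_ctx G -> min_ty R -> min_ty (expose G R).
Proof.
  intros HG HR.
  destruct R; try (destruct G; exact HR).
  apply min_base, is_topty_expose; simpl; auto.
Qed.

Lemma min_ty_arr_cod (S0 T : ty) : min_ty (TArr S0 T) -> min_ty T.
Proof.
  intros H; inversion H; subst; auto.
  apply min_base; simpl in *; tauto.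
Qed.

Lemma min_ty_instantiate (Q S' T U : ty) :
  min_ty Q -> Q = TAllK S' T \/ Q = TAllT S' T -> is_topty U ->
  min_ty (tsubst 0 U T).
Proof.
  intros HQ [-> | ->] HU; inversion HQ; subst.
  - contradiction.
  - apply min_ty_tsubst; auto.
  - apply min_base, is_topty_tsubst; simpl in *; tauto.
Qed.

Theorem lemma8p2 (G : ctx) (t : tm) (T : ty) :
  wf_ctx G -> topty_ctx G -> wf_tm G t -> topty_tm t ->
  mtyp G t T -> min_ty T.
Proof.
  intros _ HG _ Ht Hty; revert HG Ht.
  induction Hty; intros HG Ht; simpl in Ht.
  - apply min_base, is_topty_tshiftn, (topty_ctx_nth G n (BVar T)); auto.
  - apply min_base; simpl; auto.
  - destruct Ht as [HS Hb].
    apply min_arr; auto.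
    apply (min_ty_tshift_inv 0), IHHty; auto.
    constructor; auto.
  - destruct Ht as [Hr _].
    apply (min_ty_arr_cod S').
    rewrite <- H0; apply min_ty_expose; auto.
  - destruct Ht as [HS Hb].
    apply min_allK; auto.
    apply IHHty; auto.
    constructor; auto.
  - destruct Ht as [Hr HS].
    apply (min_ty_instantiate (expose G R) S'); auto.
    apply min_ty_expose; auto.
Qed.
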